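(* Let $\langle E,\rightarrow\rangle$ be a computation, $b_1,b_2$ regular predicates and $b=\mathrm{reg}(b_1\vee b_2)$. The graph $S_{\max}(E)$ has the same set of consistent cuts as the slice of $\langle E,\rightarrow\rangle$ with respect to $b$.
   Context: A computation is a directed graph $\langle E, \rightarrow\rangle$ whose vertices (events) are partitioned among processes $p_1,\dots,p_n$; events on each process are totally ordered, each process has an initial event and a final event, the path relation contains Lamport's happened-before relation, and all initial (resp. final) events lie in one strongly connected component. $\top$ is the set of final events and $\mathrm{succ}(e)$ the successor of $e$ on its process. A vertex subset $C$ is a consistent cut if for every edge $(u,v)$, $v\in C$ implies $u\in C$. A predicate (evaluated on non-trivial consistent cuts) is regular if whenever consistent cuts $C_1,C_2$ satisfy it, so do $C_1\cap C_2$ and $C_1\cup C_2$. $\mathrm{reg}(c)$ is the strongest regular predicate implied by $c$. The slice with respect to a predicate $c$ is a directed graph on $E$ whose consistent cuts include every consistent cut satisfying $c$ and which has the fewest consistent cuts among all such graphs. $F_c(e)[i]$ is the earliest event on $p_i$ reachable from $e$ in the slice with respect to $c$. $F_{\max}(e)[i]$ is whichever of $F_{b_1}(e)[i]$, $F_{b_2}(e)[i]$ occurs later on $p_i$. $S_{\max}(E)$ is the directed graph on $E$ with edges from each $e\notin\top$ to $\mathrm{succ}(e)$ and from each $e$ to $F_{\max}(e)[i]$ for every $i$. *)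

From mathcomp Require Import all_boot.
Set Implicit Arguments. Unset Strict Implicit. Unset Printing Implicit Defensive.

(* A computation: events E (finite), partitioned among n processes by [proc];
   on each process events are totally ordered by [pos] (injective on each
   process); [msg] is the message relation (for Lamport's happened-before);
   [edge] is the edge relation of the directed graph <E, ->. *)

Section Defs.
Variables (n : nat) (E : finType) (proc : E -> 'I_n) (pos : E -> nat).

Definition initial (e : E) : Prop := forall g, proc g = proc e -> pos e <= pos g.
Definition final (e : E) : Prop := forall g, proc g = proc e -> pos g <= pos e.

Definition is_succ (e f : E) : bool :=
  [&& proc f == proc e, pos e < pos f &
      [forall g, (proc g == proc e) ==> ~~ ((pos e < pos g) && (pos g < pos f))]].

Record computation (msg edge : rel E) : Prop := Computation {
  pos_inj : forall e f, proc e = proc f -> pos e = pos f -> e = f;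
  proc_nonempty : forall i : 'I_n, exists e, proc e = i;
  (* the path relation contains happened-before (generated by process order
     and messages; connect is transitive) *)
  proc_order_path : forall e f, proc e = proc f -> pos e < pos f -> connect edge e f;
  msg_path : forall e f, msg e f -> connect edge e f;
  initial_scc : forall e f, initial e -> initial f -> connect edge e f;
  final_scc : forall e f, final e -> final f -> connect edge e f
}.

Definition consistent (G : rel E) (C : {set E}) : bool :=
  [forall u, forall v, G u v ==> (v \in C) ==> (u \in C)].

Definition cuts (G : rel E) : {set {set E}} := [set C | consistent G C].

Definition nontrivial (C : {set E}) : Prop := C != set0 /\ C != setT.

Definition sat (edge : rel E) (c : {set E} -> Prop) (C : {set E}) : Prop :=
  consistent edge C /\ nontrivial C /\ c C.

Definition regular (edge : rel E) (c : {set E} -> Prop) : Prop :=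
  forall C1 C2, sat edge c C1 -> sat edge c C2 ->
    c (C1 :&: C2) /\ c (C1 :|: C2).

Definition implies (edge : rel E) (c d : {set E} -> Prop) : Prop :=
  forall C, sat edge c C -> d C.

Definition is_reg (edge : rel E) (c b : {set E} -> Prop) : Prop :=
  [/\ regular edge b, implies edge c b &
      forall b', regular edge b' -> implies edge c b' -> implies edge b b'].

Definition is_slice (edge : rel E) (c : {set E} -> Prop) (G : rel E) : Prop :=
  (forall C, sat edge c C -> consistent G C) /\
  (forall G' : rel E, (forall C, sat edge c C -> consistent G' C) ->
     #|cuts G| <= #|cuts G'|).

Definition earliest (G : rel E) (e v : E) : bool :=
  connect G e v &&
  [forall w, ((proc w == proc v) && connect G e w) ==> (pos v <= pos w)].

(* v = F_max(e)[proc v], with F_{b1}, F_{b2} computed in slices G1, G2 *)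
Definition Fmax_edge (G1 G2 : rel E) (e v : E) : bool :=
  [exists v1, exists v2,
     [&& earliest G1 e v1, earliest G2 e v2, proc v1 == proc v2 &
         v == (if pos v1 <= pos v2 then v2 else v1)]].

Definition Smax (G1 G2 : rel E) : rel E :=
  fun u v => is_succ u v || Fmax_edge G1 G2 u v.

End Defs.

From mathcomp Require Import all_boot.
Set Implicit Arguments. Unset Strict Implicit.

(* Minimality of slices makes every cut that is consistent for a slice of [c]
   consistent for any graph respecting all cuts satisfying [c].  Hence cuts
   consistent for [G1] or for [G2] are [G]-consistent, so for an edge [u -> v]
   of [G] neither the events unreachable from [u] in [G1] nor those unreachable
   in [G2] can contain [v]: [v] is reachable from [u] in both slices, and the
   [F_max] edge out of [u] on the process of [v] carries every
   [S_max]-consistent cut containing [v] back to [u].  Conversely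
   [S_max]-consistency is a regular predicate implied by [b1 \/ b2], hence by
   [reg (b1 \/ b2)], and minimality of [G] makes every [G]-consistent cut
   [S_max]-consistent. *)

Section Consistency.
Variable E : finType.
Implicit Types (G H : rel E) (C D : {set E}).

Lemma consistentP G C :
  reflect (forall u v, G u v -> v \in C -> u \in C) (consistent G C).
Proof.
apply: (iffP forallP) => [cC u v Guv vC | cC u].
  by move/forallP/(_ v): (cC u); rewrite Guv vC.
by apply/forallP => v; apply/implyP => Guv; apply/implyP; apply: cC.
Qed.

Lemma consistent_connect G C u v :
  consistent G C -> connect G u v -> v \in C -> u \in C.
Proof.
move=> /consistentP cC /connectP [p]; elim: p u => [|w p IHp] u /=.
  by move=> _ ->.
by case/andP=> Guw pw lastE vC; apply: cC Guw _; apply: IHp pw lastE vC.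
Qed.

Lemma consistentI G C D :
  consistent G C -> consistent G D -> consistent G (C :&: D).
Proof.
move=> /consistentP cC /consistentP cD; apply/consistentP => u v Guv.
by rewrite !inE => /andP [vC vD]; rewrite (cC _ _ Guv vC) (cD _ _ Guv vD).
Qed.

Lemma consistentU G C D :
  consistent G C -> consistent G D -> consistent G (C :|: D).
Proof.
move=> /consistentP cC /consistentP cD; apply/consistentP => u v Guv.
by rewrite !inE => /orP [vC | vD]; rewrite ?(cC _ _ Guv vC) ?(cD _ _ Guv vD) ?orbT.
Qed.

Lemma consistent_relU G H C :
  consistent (fun u v => G u v || H u v) C = consistent G C && consistent H C.
Proof.
apply/consistentP/andP => [cC | [/consistentP cGC /consistentP cHC]].
  by split; apply/consistentP => u v uv; apply: cC; rewrite uv ?orbT.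
by move=> u v /orP [uv | uv]; [apply: cGC uv | apply: cHC uv].
Qed.

Lemma consistent_unreachable G u : consistent G [set x | ~~ connect G u x].
Proof.
apply/consistentP => w v Gwv; rewrite !inE; apply: contra => uw.
exact: connect_trans uw (connect1 Gwv).
Qed.

End Consistency.

Section Slices.
Variables (E : finType) (edge : rel E).

Lemma regular_consistent (H : rel E) : regular edge (fun C => consistent H C).
Proof.
by move=> C D [_ [_ HC]] [_ [_ HD]]; split; [apply: consistentI | apply: consistentU].
Qed.

Lemma sat_or (c d : {set E} -> Prop) C :
  sat edge c C \/ sat edge d C -> sat edge (fun C => c C \/ d C) C.
Proof.
by case=> [[eC [ntC cC]] | [eC [ntC dC]]]; split=> //; split=> //; [left | right].
Qed.

Lemma is_reg_sat (c b : {set E} -> Prop) C :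
  is_reg edge c b -> sat edge c C -> sat edge b C.
Proof. by case=> _ cb _ [eC [ntC cC]]; split=> //; split=> //; apply: cb. Qed.

(* Adding the edges of [H] to the slice [S] keeps every cut satisfying [c];
   minimality then forbids losing any cut of [S]. *)
Lemma slice_consistent_sub (c : {set E} -> Prop) (S H : rel E) :
  is_slice edge c S -> (forall C, sat edge c C -> consistent H C) ->
  forall C, consistent S C -> consistent H C.
Proof.
move=> [satS minS] satH C SC.
pose SH u v := S u v || H u v.
have sub_cuts : cuts SH \subset cuts S.
  by apply/subsetP => D; rewrite !inE consistent_relU => /andP [].
have le_cuts : #|cuts S| <= #|cuts SH|.
  by apply: minS => D cD; rewrite consistent_relU satS ?satH.
have /setP/(_ C) : cuts SH = cuts S.
  by apply/eqP; rewrite eqEcard sub_cuts le_cuts.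
by rewrite !inE consistent_relU SC /= => ->.
Qed.

End Slices.

Section Processes.
Variables (n : nat) (E : finType) (proc : E -> 'I_n) (pos : E -> nat).
Hypothesis pos_inj : forall e f, proc e = proc f -> pos e = pos f -> e = f.

Definition proc_ordered (H : rel E) : Prop :=
  forall y x, proc y = proc x -> pos y < pos x -> connect H y x.

Lemma consistent_downward (H : rel E) C x y :
  proc_ordered H -> consistent H C ->
  proc y = proc x -> pos y <= pos x -> x \in C -> y \in C.
Proof.
move=> ordH cC yx; rewrite leq_eqVlt => /orP [/eqP yx_pos | lt_yx] xC.
  by rewrite (pos_inj yx yx_pos).
exact: consistent_connect cC (ordH _ _ yx lt_yx) xC.
Qed.

Lemma exists_earliest (G : rel E) e x : connect G e x ->
  exists2 v, earliest proc pos G e v & proc v = proc x /\ pos v <= pos x.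
Proof.
move=> ex; pose P w := (proc w == proc x) && connect G e w.
have Px : P x by rewrite /P eqxx ex.
case: (arg_minnP pos Px) => v /andP [/eqP vx ev] minv.
exists v; last by split; rewrite // minv.
rewrite /earliest ev; apply/forallP => w; apply/implyP => /andP [/eqP wv ew].
by apply: minv; rewrite /P wv vx eqxx.
Qed.

Lemma exists_succ y x : proc y = proc x -> pos y < pos x ->
  exists2 s, is_succ proc pos y s & pos s <= pos x.
Proof.
move=> yx lt_yx; pose P z := (proc z == proc y) && (pos y < pos z).
have Px : P x by rewrite /P yx eqxx lt_yx.
case: (arg_minnP pos Px) => s /andP [sy lt_ys] mins.
exists s; last exact: mins.
rewrite /is_succ sy lt_ys; apply/forallP => g; apply/implyP => gy.
apply/negP => /andP [lt_yg lt_gs].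
by have := mins g; rewrite /P gy lt_yg leqNgt lt_gs => /(_ isT).
Qed.

Lemma proc_ordered_succ : proc_ordered (is_succ proc pos).
Proof.
move=> y x; have [k] := ubnP (pos x - pos y); elim: k y => // k IHk y.
move=> lt_k yx lt_yx; have [s ys le_sx] := exists_succ yx lt_yx.
have /and3P [/eqP sy lt_ys _] := ys.
have sx : proc s = proc x by rewrite sy.
move: le_sx; rewrite leq_eqVlt => /orP [/eqP sx_pos | lt_sx].
  by rewrite -(pos_inj sx sx_pos) connect1.
apply: connect_trans (connect1 ys) (IHk s _ sx lt_sx).
by rewrite ltnS in lt_k; apply: leq_trans lt_k; rewrite ltn_sub2l.
Qed.

Section Smax.
Variables G1 G2 : rel E.

Lemma Fmax_edge_dominates u w : Fmax_edge proc pos G1 G2 u w ->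
  exists v1 v2, [/\ connect G1 u v1 /\ connect G2 u v2,
                    proc v1 = proc w /\ proc v2 = proc w &
                    pos v1 <= pos w /\ pos v2 <= pos w].
Proof.
case/existsP => v1 /existsP [v2 /and4P [/andP [uv1 _] /andP [uv2 _] /eqP v12 /eqP ->]].
by exists v1, v2; case: leqP => [le_12 | /ltnW le_21].
Qed.

Lemma Fmax_edge_below u x : connect G1 u x -> connect G2 u x ->
  exists2 w, Fmax_edge proc pos G1 G2 u w & proc w = proc x /\ pos w <= pos x.
Proof.
move=> ux1 ux2.
have [v1 uv1 [v1x le_v1x]] := exists_earliest ux1.
have [v2 uv2 [v2x le_v2x]] := exists_earliest ux2.
exists (if pos v1 <= pos v2 then v2 else v1); last by case: ifP.
by apply/existsP; exists v1; apply/existsP; exists v2; rewrite uv1 uv2 v1x v2x !eqxx.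
Qed.

Lemma proc_ordered_Smax : proc_ordered (Smax proc pos G1 G2).
Proof.
move=> y x yx lt_yx; apply: connect_sub (proc_ordered_succ yx lt_yx) => u v uv.
by apply: connect1; rewrite /Smax uv.
Qed.

Lemma consistent_Smax (edge : rel E) C :
  proc_ordered edge -> consistent edge C ->
  consistent G1 C \/ consistent G2 C -> consistent (Smax proc pos G1 G2) C.
Proof.
move=> ord_edge eC G12C; apply/consistentP => u w /orP [uw | Fuw] wC.
  have /and3P [/eqP wu lt_uw _] := uw.
  exact: consistent_connect eC (ord_edge _ _ (esym wu) lt_uw) wC.
have [v1 [v2 [[uv1 uv2] [v1w v2w] [le_v1w le_v2w]]]] := Fmax_edge_dominates Fuw.
have v1C := consistent_downward ord_edge eC v1w le_v1w wC.
have v2C := consistent_downward ord_edge eC v2w le_v2w wC.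
by case: G12C => GC; [exact: consistent_connect GC uv1 v1C
                     | exact: consistent_connect GC uv2 v2C].
Qed.

Lemma Smax_consistent_sub (G : rel E) C :
  (forall D, consistent G1 D -> consistent G D) ->
  (forall D, consistent G2 D -> consistent G D) ->
  consistent (Smax proc pos G1 G2) C -> consistent G C.
Proof.
move=> G1G G2G SC; apply/consistentP => u v Guv vC.
have [/andP [uv1 uv2] | not_both] := boolP (connect G1 u v && connect G2 u v).
  have [w uw [wv le_wv]] := Fmax_edge_below uv1 uv2.
  have wC : w \in C := consistent_downward proc_ordered_Smax SC wv le_wv vC.
  by apply: consistent_connect SC (connect1 _) wC; rewrite /Smax uw orbT.
pose D := [set x | ~~ connect G1 u x] :|: [set x | ~~ connect G2 u x].
have GD : consistent G D.
  by apply: consistentU; [apply: G1G | apply: G2G]; apply: consistent_unreachable.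
have vD : v \in D by rewrite !inE -negb_and.
by move/consistentP/(_ u v Guv vD): GD; rewrite !inE !connect0.
Qed.

End Smax.
End Processes.

Theorem theorem15 (n : nat) (E : finType) (proc : E -> 'I_n) (pos : E -> nat)
  (msg edge : rel E) (Hcomp : computation proc pos msg edge)
  (b1 b2 b : {set E} -> Prop)
  (Hb1 : regular edge b1) (Hb2 : regular edge b2)
  (Hb : is_reg edge (fun C => b1 C \/ b2 C) b)
  (G1 G2 G : rel E)
  (HG1 : is_slice edge b1 G1) (HG2 : is_slice edge b2 G2)
  (HG : is_slice edge b G) :
  cuts (Smax proc pos G1 G2) = cuts G.
Proof.
have inj := pos_inj Hcomp.
have ord_edge : proc_ordered proc pos edge := proc_order_path Hcomp.
have G1G := slice_consistent_sub HG1 (fun C b1C =>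
  HG.1 C (is_reg_sat Hb (sat_or (or_introl b1C)))).
have G2G := slice_consistent_sub HG2 (fun C b2C =>
  HG.1 C (is_reg_sat Hb (sat_or (or_intror b2C)))).
apply/setP => C; rewrite !inE; apply/idP/idP; first exact: Smax_consistent_sub.
apply: (slice_consistent_sub HG) => D bD.
have [_ _ reg_min] := Hb.
apply: (reg_min _ (@regular_consistent _ edge _) _ D bD).
move=> D' [eD' [ntD' b12D']] /=; apply: (consistent_Smax inj ord_edge eD').
by case: b12D' => [b1D' | b2D']; [left; apply: HG1.1 | right; apply: HG2.1].
Qed.
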